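(* Let $\boldsymbol\mu$ be a ratio set and let $\boldsymbol\alpha$ be a derivative addendum for $\boldsymbol\mu$. For all $S,T\in\mathbb T$ generated by $\boldsymbol\mu$: if $S\prec^{\boldsymbol\mu}T$, $T\not\asymp1$, and $\boldsymbol\mu$ witnesses $T$, then $S'\prec^{\boldsymbol\alpha}T'$.
   Context: $\mathbb T$ is the differential field of real grid-based transseries over the ordered group $\mathfrak G$ of transmonomials, with $\prec,\asymp$; $\operatorname{mag}T$ is the dominant monomial of $T\ne0$. A ratio set is a finite $\boldsymbol\mu=\{\mu_1,\dots,\mu_n\}\subset\{\mathfrak g\prec1\}$; $\boldsymbol\mu^*$, $\boldsymbol\mu^+$ are the sets $\boldsymbol\mu^{\mathbf k}$ with $\mathbf k\in\mathbb Z^n$, $\mathbf k\ge\mathbf 0$ (resp. additionally $\mathbf k\ne\mathbf0$); $\mathfrak J^{\boldsymbol\mu}$ is the group generated, $\mathfrak J^{\boldsymbol\mu,\mathbf m}=\{\boldsymbol\mu^{\mathbf k}:\mathbf k\ge\mathbf m\}$. Monomials: $\mathfrak m\prec^{\boldsymbol\mu}\mathfrak n$ iff $\mathfrak m/\mathfrak n\in\boldsymbol\mu^+$; transseries: $A\prec^{\boldsymbol\mu}B$ iff each $\mathfrak a\in\operatorname{supp}A$ is $\prec^{\boldsymbol\mu}$ some $\mathfrak b\in\operatorname{supp}B$. $\boldsymbol\alpha$ witnesses nonzero $T$ iff $\operatorname{supp}T\subseteq(\operatorname{mag}T)\boldsymbol\alpha^*$, and generates $T$ iff $\operatorname{supp}T\subseteq\mathfrak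 J^{\boldsymbol\alpha,\mathbf m}$ for some $\mathbf m$. A derivative addendum for $\boldsymbol\mu$ is a ratio set $\boldsymbol\alpha$ with: (a) $\boldsymbol\alpha^*\supseteq\boldsymbol\mu$; (b) for every $\mathfrak m\in\mathfrak J^{\boldsymbol\mu}$, $\mathfrak m'$ is witnessed and generated by $\boldsymbol\alpha$; (c) for all $\mathfrak m,\mathfrak n\in\mathfrak J^{\boldsymbol\mu}$ with $\mathfrak m\prec^{\boldsymbol\mu}\mathfrak n$, $\mathfrak n\ne1$: $\mathfrak m'\prec^{\boldsymbol\alpha}\operatorname{mag}(\mathfrak n')$. *)

(* Transmonomials are written ADDITIVELY: the monomial 1 is 0, the product
   m*n is m + n, m/n is m - n, mu^k is \sum_i mu_i *~ k_i, and  g < 1  is  lt g 0. *)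
From HB Require Import structures.
From mathcomp Require Import all_boot all_order all_algebra.
From Stdlib Require Import Rdefinitions.
From mathcomp Require Import Rstruct.
Set Implicit Arguments. Unset Strict Implicit. Unset Printing Implicit Defensive.
Import Order.TTheory GRing.Theory Num.Theory.
Local Open Scope ring_scope.

(* An ordered abelian group (the group of transmonomials, with <).
   oglt x y  means  x < y  (i.e. x is asymptotically smaller than y). *)
Record ordered_group := OrderedGroup {
  og_sort :> zmodType;
  oglt : rel og_sort;
  oglt_irr : forall x, ~~ oglt x x;
  oglt_trans : forall x y z, oglt x y -> oglt y z -> oglt x z;
  oglt_total : forall x y, x != y -> oglt x y || oglt y x;
  oglt_add : forall x y z, oglt x y -> oglt (x + z) (y + z)
}.

Section Defs.
Variable G : ordered_group.

(* transseries: real coefficient functions on the monomials *)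
Definition ser := G -> R.

Definition mono (m : G) : ser := fun g => if g == m then 1 else 0.

Definition ratio_set (mu : seq G) : bool := all (fun g => oglt g 0) mu.

Definition rpow (mu : seq G) (k : 'I_(size mu) -> int) : G :=
  \sum_(i < size mu) (mu`_i) *~ k i.

Definition in_star (mu : seq G) (g : G) : Prop :=
  exists k : 'I_(size mu) -> int, (forall i, 0 <= k i) /\ g = rpow k.
Definition in_plus (mu : seq G) (g : G) : Prop :=
  exists k : 'I_(size mu) -> int,
    [/\ forall i, 0 <= k i, exists i, k i != 0 & g = rpow k].
Definition in_J (mu : seq G) (g : G) : Prop :=
  exists k : 'I_(size mu) -> int, g = rpow k.
Definition in_Jm (mu : seq G) (m : 'I_(size mu) -> int) (g : G) : Prop :=
  exists k : 'I_(size mu) -> int, (forall i, m i <= k i) /\ g = rpow k.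

Definition mprec (mu : seq G) (a b : G) : Prop := in_plus mu (a - b).
Definition sprec (mu : seq G) (A B : ser) : Prop :=
  forall a, A a != 0 -> exists2 b, B b != 0 & mprec mu a b.

Definition is_mag (T : ser) (m : G) : Prop :=
  T m != 0 /\ forall g, T g != 0 -> g != m -> oglt g m.

Definition asymp1 (T : ser) : Prop := is_mag T 0.

(* alpha witnesses T: supp T subset (mag T) alpha^*  (vacuous for T = 0) *)
Definition witnesses (alpha : seq G) (T : ser) : Prop :=
  forall g, T g != 0 -> exists2 m, is_mag T m & in_star alpha (g - m).

Definition generates (alpha : seq G) (T : ser) : Prop :=
  exists m : 'I_(size alpha) -> int, forall g, T g != 0 -> in_Jm m g.

Definition grid_based (T : ser) : Prop :=
  exists (alpha : seq G) (ms : seq G), ratio_set alpha /\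
    forall g, T g != 0 -> exists2 m, m \in ms & in_star alpha (g - m).

(* strong linearity of a derivation d on grid-based transseries:
   (sum_m t_m m)' = sum_m t_m m'  (the family being summable: for each g
   only finitely many m in supp T have g in supp m'). *)
Definition strongly_linear (d : ser -> ser) : Prop :=
  forall T, grid_based T -> forall g, exists s : seq G,
    (forall m, T m != 0 -> d (mono m) g != 0 -> m \in s) /\
    d T g = \sum_(m <- undup s) T m * d (mono m) g.

Definition derivative_addendum (d : ser -> ser) (mu alpha : seq G) : Prop :=
  [/\ ratio_set alpha,
      forall g, g \in mu -> in_star alpha g,
      forall m, in_J mu m ->
                  witnesses alpha (d (mono m)) /\ generates alpha (d (mono m))
    & forall m n, in_J mu m -> in_J mu n -> mprec mu m n -> n != 0 ->
                  exists2 h, is_mag (d (mono n)) h & sprec alpha (d (mono m)) (mono h)].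

End Defs.

(* If a lies in supp S', strong linearity puts it in supp m' for some m in supp S.
   Since mu witnesses T, m <^mu mag T =: n, so by axiom (c) a <^alpha h := mag n'.
   It remains to see that h lies in supp T': every other monomial i of supp T also
   satisfies i <^mu n, so (c) gives i' <^alpha h, whence h is not in supp i' (the
   monomial 1 is not in alpha^+), and the coefficient of h in T' is T_n * n'_h <> 0. *)
From HB Require Import structures.
From mathcomp Require Import all_boot all_order all_algebra.
From Stdlib Require Import Rdefinitions.
From mathcomp Require Import Rstruct.
Import Order.TTheory GRing.Theory Num.Theory.
Local Open Scope ring_scope.
Set Implicit Arguments. Unset Strict Implicit.

Section Monomials.
Variable G : ordered_group.
Implicit Types (x y z g h : G) (mu : seq G).

Definition ogle x y := (x == y) || oglt x y.

Lemma oglt_le_add0 x y : oglt x 0 -> ogle y 0 -> oglt (x + y) 0.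
Proof.
move=> hx /orP[/eqP->|hy]; first by rewrite addr0.
by have := oglt_add y hx; rewrite add0r => /oglt_trans; apply.
Qed.

Lemma ogle_add0 x y : ogle x 0 -> ogle y 0 -> ogle (x + y) 0.
Proof.
move=> /orP[/eqP->|hx] hy; first by rewrite add0r.
by apply/orP; right; apply: oglt_le_add0.
Qed.

Lemma oglt_mulrn0 g n : oglt g 0 -> oglt (g *+ n.+1) 0.
Proof.
move=> hg; elim: n => [|n IH]; first by rewrite mulr1n.
by rewrite mulrS; apply: oglt_le_add0 => //; apply/orP; right.
Qed.

Lemma ogle_mulrz0 g (k : int) : oglt g 0 -> 0 <= k -> ogle (g *~ k) 0.
Proof.
case: k => // -[|n] hg _; first by rewrite mulr0z /ogle eqxx.
by apply/orP; right; rewrite -pmulrn; apply: oglt_mulrn0.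
Qed.

Lemma ratio_set_nth mu (i : 'I_(size mu)) : ratio_set mu -> oglt mu`_i 0.
Proof. by move=> /allP; apply; apply: mem_nth. Qed.

Lemma in_plus_lt0 mu g : ratio_set mu -> in_plus mu g -> oglt g 0.
Proof.
move=> Hmu [k [k_ge0 [i ki_neq0] ->]]; rewrite /rpow (bigD1 i) //=.
apply: oglt_le_add0.
  move: ki_neq0 (k_ge0 i); case: (k i) => // -[|n] // _ _.
  by rewrite -pmulrn; apply: oglt_mulrn0; apply: ratio_set_nth.
apply: (big_ind (fun x => ogle x 0)); [by rewrite /ogle eqxx | exact: ogle_add0 |].
by move=> j _; apply: ogle_mulrz0 => //; apply: ratio_set_nth.
Qed.

Lemma mprec_irr mu g : ratio_set mu -> ~ mprec mu g g.
Proof.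
by move=> Hmu /(in_plus_lt0 Hmu); rewrite subrr (negbTE (oglt_irr _)).
Qed.

Lemma rpowD mu (k1 k2 : 'I_(size mu) -> int) :
  rpow (fun i => k1 i + k2 i) = rpow k1 + rpow k2.
Proof. by rewrite /rpow -big_split; apply: eq_bigr => i _; rewrite mulrzDr. Qed.

Lemma rpowB mu (k1 k2 : 'I_(size mu) -> int) :
  rpow (fun i => k1 i - k2 i) = rpow k1 - rpow k2.
Proof. by rewrite /rpow -sumrB; apply: eq_bigr => i _; rewrite mulrzBr. Qed.

Lemma mprec_star_trans mu x y z :
  mprec mu x y -> in_star mu (y - z) -> mprec mu x z.
Proof.
move=> [k1 [k1_ge0 [i ki_neq0] e1]] [k2 [k2_ge0 e2]].
exists (fun j => k1 j + k2 j); split.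
- by move=> j; rewrite addr_ge0.
- by exists i; rewrite paddr_eq0 // negb_and ki_neq0.
- by rewrite rpowD -e1 -e2 addrA subrK.
Qed.

Lemma in_star_plus mu g : in_star mu g -> g != 0 -> in_plus mu g.
Proof.
move=> [k [k_ge0 ->]] rpow_neq0; exists k; split => //.
apply/existsP; apply: contraNT rpow_neq0 => /existsPn k0.
by apply/eqP; apply: big1 => j _; rewrite (eqP (negPn (k0 j))) mulr0z.
Qed.

Lemma generates_in_J mu (T : ser G) g : generates mu T -> T g != 0 -> in_J mu g.
Proof. by move=> [m Hm] /Hm [k [_ ->]]; exists k. Qed.

Lemma generates_grid_based mu (T : ser G) :
  ratio_set mu -> generates mu T -> grid_based T.
Proof.
move=> Hmu [m Hm]; exists mu, [:: rpow m]; split => // g /Hm [k [m_le_k ->]].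
exists (rpow m); first by rewrite mem_seq1.
by exists (fun i => k i - m i); split; [move=> i; rewrite subr_ge0 | rewrite rpowB].
Qed.

Lemma is_mag_uniq (T : ser G) m1 m2 : is_mag T m1 -> is_mag T m2 -> m1 = m2.
Proof.
move=> [T1 lt1] [T2 lt2]; apply/eqP; apply: contraT => m12.
have m21 : m2 != m1 by rewrite eq_sym.
by have := oglt_trans (lt1 _ T2 m21) (lt2 _ T1 m12); rewrite (negbTE (oglt_irr _)).
Qed.

Lemma sprec_mono mu (A : ser G) h a : sprec mu A (mono h) -> A a != 0 -> mprec mu a h.
Proof. by move=> Ah /Ah [b]; rewrite /mono; have [-> _|_] := eqVneq b h; rewrite ?eqxx. Qed.

Lemma witnesses_mprec_mag mu (T : ser G) n i :
  witnesses mu T -> is_mag T n -> T i != 0 -> i != n -> mprec mu i n.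
Proof.
move=> wT magn Ti ni; have [n' magn' star_i] := wT i Ti.
rewrite -(is_mag_uniq magn' magn); apply: in_star_plus => //.
by rewrite subr_eq0 (is_mag_uniq magn' magn).
Qed.

End Monomials.

Section StronglyLinear.
Variables (G : ordered_group) (d : ser G -> ser G).
Hypothesis d_strong : strongly_linear d.

Lemma strongly_linear_supp (S : ser G) a :
  grid_based S -> d S a != 0 -> exists2 m, S m != 0 & d (mono m) a != 0.
Proof.
move=> gS; have [s [_ ->]] := d_strong gS a => sum_neq0.
have /hasP [m _] : has (fun m => S m * d (mono m) a != 0) (undup s).
  apply: contraNT sum_neq0 => /hasPn S'a0; apply/eqP; rewrite big1_seq //.
  by move=> m /andP[_ /S'a0 /negPn /eqP].
by rewrite mulf_eq0 negb_or => /andP[Sm dm]; exists m.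
Qed.

Lemma strongly_linear_single (T : ser G) n g :
  grid_based T -> (forall i, T i != 0 -> i != n -> d (mono i) g = 0) ->
  d T g = T n * d (mono n) g.
Proof.
move=> gT others0; have [s [in_s ->]] := d_strong gT g.
have others_eq0 i : i != n -> T i * d (mono i) g = 0.
  by move=> ni; have [->|Ti] := eqVneq (T i) 0; [rewrite mul0r | rewrite others0 ?mulr0].
have [Tn_d0|Tn_d] := eqVneq (T n * d (mono n) g) 0.
  rewrite Tn_d0 big1 // => i _.
  by have [->|] := eqVneq i n; [rewrite Tn_d0 | exact: others_eq0].
have n_s : n \in undup s.
  by move: Tn_d; rewrite mulf_eq0 negb_or => /andP[Tn dn]; rewrite mem_undup in_s.
by rewrite (bigD1_seq n) ?undup_uniq //= big1 ?addr0.
Qed.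

End StronglyLinear.

Section DerivativeAddendum.
Variables (G : ordered_group) (d : ser G -> ser G) (mu alpha : seq G).
Hypotheses (d_strong : strongly_linear d) (Hmu : ratio_set mu)
  (Halpha : derivative_addendum d mu alpha).

Lemma mag_deriv_mag_in_supp (T : ser G) n h :
  generates mu T -> witnesses mu T -> is_mag T n -> n != 0 ->
  is_mag (d (mono n)) h -> d T h != 0.
Proof.
case: Halpha => Halpha_ratio _ _ Hc gT wT [Tn magn] n_neq0 [dn_h magh].
rewrite (strongly_linear_single d_strong (n := n)) ?mulf_neq0 //;
  first exact: generates_grid_based gT.
move=> i Ti ni; apply/eqP; apply: contraT => di_h; exfalso.
have [h' magh' di_h'] := Hc i n (generates_in_J gT Ti) (generates_in_J gT Tn)
  (witnesses_mprec_mag wT (conj Tn magn) Ti ni) n_neq0.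
rewrite (is_mag_uniq magh' (conj dn_h magh)) in di_h'.
exact: mprec_irr Halpha_ratio (sprec_mono di_h' di_h).
Qed.

End DerivativeAddendum.

Theorem proposition4p8 (G : ordered_group) (d : ser G -> ser G)
  (d_grid : forall T : ser G, grid_based T -> grid_based (d T))
  (d_strong : strongly_linear d)
  (mu alpha : seq G) (Hmu : ratio_set mu)
  (Halpha : derivative_addendum d mu alpha)
  (S T : ser G) :
  generates mu S -> generates mu T ->
  sprec mu S T -> ~ asymp1 T -> witnesses mu T ->
  sprec alpha (d S) (d T).
Proof.
move=> gS gT ST T_not_asymp1 wT a dS_a.
have [m Sm dm_a] := strongly_linear_supp d_strong (generates_grid_based Hmu gS) dS_a.
have [n Tn mn] := ST m Sm.
have [n0 magn0 n_star] := wT n Tn.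
have n0_neq0 : n0 != 0 by by apply: contra_notN T_not_asymp1 => /eqP n0_eq0; rewrite /asymp1 -n0_eq0.
have [_ _ _ Hc] := Halpha.
have [h magh dm_h] := Hc m n0 (generates_in_J gS Sm) (generates_in_J gT magn0.1)
  (mprec_star_trans mn n_star) n0_neq0.
exists h; last exact: sprec_mono dm_h dm_a.
exact: (mag_deriv_mag_in_supp d_strong Hmu Halpha gT wT magn0 n0_neq0 magh).
Qed.
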